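(* Let $f$ be a complex polynomial of degree $d$ with $f(0)\ne0$, with roots $\zeta_1,\dots,\zeta_d$ (counted with multiplicity) ordered so that $|\zeta_1|\le\cdots\le|\zeta_d|$. For $N\ge0$ let $g=G^Nf=\sum_i g_ix^i$, let $r^{(N)}:[0,d]\to\mathbb{R}\cup\{+\infty\}$ be the piecewise linear function with $r^{(N)}(i)=-2^{-N}\log|g_i|$ for $i=0,\dots,d$, and let $\varphi^{(N)}$ be its convex hull (the greatest convex function on $[0,d]$ bounded above by $r^{(N)}$). Then for every $i=1,\dots,d$, \[ \lim_{N\to\infty}\big(\varphi^{(N)}(i)-\varphi^{(N)}(i-1)\big)=\log|\zeta_i|, \] and moreover $\big|\varphi^{(N)}(i)-\varphi^{(N)}(i-1)-\log|\zeta_i|\big|\le 2^{-N}\log(2d)$ for every $N$.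
   Context: $\log$ is the natural logarithm. The Graeffe operator maps a degree $d$ polynomial $f$ to $Gf(x)=(-1)^d f(\sqrt{x})f(-\sqrt{x})$, again of degree $d$; $G^N$ is its $N$-th iterate. The function $\varphi^{(N)}$ is called the $N$-th Renormalized Newton Diagram of $f$. *)

From mathcomp Require Import all_boot all_order all_algebra.
From mathcomp Require Import complex.
From mathcomp Require Import all_classical all_reals all_analysis.

Set Implicit Arguments.
Unset Strict Implicit.
Unset Printing Implicit Defensive.

Import Order.TTheory GRing.Theory Num.Theory.
Local Open Scope ring_scope.

Section Graeffe.
Variable R : realType.
Local Notation C := R[i].

Definition modC (z : C) : R := Normc.normc z.

(* Graeffe operator: (Gf)(x) = (-1)^d f(sqrt x) f(-sqrt x), d = deg f.
   f(y) f(-y) is an even polynomial h(y) = q(y^2); q = even_poly h is the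
   polynomial whose i-th coefficient is the 2i-th coefficient of h. *)
Definition graeffe (f : {poly C}) : {poly C} :=
  (-1) ^+ (size f).-1 *: even_poly (f * (f \Po (- 'X))).

Definition graeffeN (N : nat) (f : {poly C}) : {poly C} := iter N graeffe f.

Definition rnode (f : {poly C}) (N i : nat) : \bar R :=
  let g := graeffeN N f in
  if g`_i == 0 then +oo%E else (- (2 ^- N) * ln (modC g`_i))%:E.

(* piecewise linear interpolation on [0,d] of the values a 0, ..., a d
   (with value +oo on an open segment adjacent to an infinite node) *)
Definition pl_interp (a : nat -> \bar R) (x : R) : \bar R :=
  let i := Num.truncn x in
  let t := x - i%:R in
  if t == 0 then a i
  else ((1 - t)%:E * a i + t%:E * a i.+1)%E.

Definition convex_on (d : nat) (c : R -> R) : Prop :=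
  forall x y t : R, 0 <= x <= d%:R -> 0 <= y <= d%:R -> 0 <= t <= 1 ->
    c ((1 - t) * x + t * y) <= (1 - t) * c x + t * c y.

Definition convex_hull (d : nat) (r : R -> \bar R) (x : R) : \bar R :=
  ereal_sup [set (c x)%:E | c in [set c : R -> R | convex_on d c /\
               (forall y, 0 <= y <= d%:R -> ((c y)%:E <= r y)%E)]].

Definition rnd (f : {poly C}) (N : nat) : R -> \bar R :=
  convex_hull (size f).-1 (pl_interp (rnode f N)).

End Graeffe.

(* Write c for the leading coefficient of f.  Then g := G^N f is
   c^(2^N) * prod (X - zeta_k^(2^N)), so for mu := |zeta_i|^(2^N) the first i
   roots of g have modulus at most mu and the last d - i + 1 at least mu.
   Multiplying g by the truncated expansion of prod 1/(1 - X/w) over its large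
   roots w shows that max_k |g_k| rho^k is attained at some k < i when
   rho = mu/(2d); the same argument applied to the reciprocal polynomial shows
   that it is attained at some k >= i when rho = 2d mu.  A maximiser k gives a
   line of slope 2^-N log rho below r^(N) that touches it at k, hence lies
   below phi^(N) and touches it at k.  By convexity the slope of phi^(N) on
   [i-1, i] is at most 2^-N log rho when k >= i and at least 2^-N log rho
   when k < i, which traps it within 2^-N log(2d) of log|zeta_i|. *)

From mathcomp Require Import all_boot all_order all_algebra.
From mathcomp Require Import complex.
From mathcomp Require Import all_classical all_reals all_analysis.
From mathcomp Require Import ring lra zify.

Set Implicit Arguments.
Unset Strict Implicit.
Unset Printing Implicit Defensive.

Import Order.TTheory GRing.Theory Num.Theory.
Import numFieldTopology.Exports numFieldNormedType.Exports.
Local Open Scope classical_set_scope.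
Local Open Scope ring_scope.

Section Modulus.
Variable R : realType.
Local Notation C := R[i].
Implicit Types x y : C.

Lemma modC_ge0 x : 0 <= modC x.
Proof. by case: x => a b; exact: sqrtr_ge0. Qed.

Lemma modC0 : modC (0 : C) = 0. Proof. exact: Normc.normc0. Qed.
Lemma modC1 : modC (1 : C) = 1. Proof. exact: Normc.normc1. Qed.
Lemma modCM x y : modC (x * y) = modC x * modC y. Proof. exact: Normc.normcM. Qed.
Lemma modCD x y : modC (x + y) <= modC x + modC y. Proof. exact: le_normcD. Qed.
Lemma modCN x : modC (- x) = modC x. Proof. exact: normcN. Qed.
Lemma modCV x : modC x^-1 = (modC x)^-1. Proof. exact: Normc.normcV. Qed.

Lemma modCX x n : modC (x ^+ n) = modC x ^+ n.
Proof. by elim: n => [|n IH]; rewrite ?modC1 // !exprS modCM IH. Qed.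

Lemma modC_eq0 x : (modC x == 0) = (x == 0).
Proof. by apply/eqP/eqP => [/Normc.eq0_normc //|->]; exact: modC0. Qed.

Lemma modC_gt0 x : x != 0 -> 0 < modC x.
Proof. by move=> x0; rewrite lt_def modC_eq0 x0 modC_ge0. Qed.

Lemma modC_sum (I : Type) (r : seq I) (P : pred I) (F : I -> C) :
  modC (\sum_(i <- r | P i) F i) <= \sum_(i <- r | P i) modC (F i).
Proof.
apply: (big_ind2 (fun (x : C) (y : R) => modC x <= y)); rewrite ?modC0 //.
by move=> x1 x2 y1 y2 h1 h2; apply: le_trans (modCD _ _) (lerD h1 h2).
Qed.

End Modulus.

Lemma ler_sum_ord_prefix (R : numDomainType) (F : nat -> R) m n :
  (m <= n)%N -> (forall k, 0 <= F k) -> \sum_(k < m) F k <= \sum_(k < n) F k.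
Proof.
move=> mn F_ge0; rewrite -(subnKC mn) big_split_ord /= lerDl.
exact: sumr_ge0.
Qed.

Lemma exists_argmax_nat (R : realDomainType) (q : nat -> R) (h : nat) :
  exists2 n, (n <= h)%N & forall l, (l <= h)%N -> q l <= q n.
Proof.
case: (@arg_maxP _ R 'I_h.+1 ord0 xpredT (fun k => q k) isT) => n _ nmax.
exists n; first by rewrite -ltnS.
by move=> l lh; exact: (nmax (Ordinal (lh : (l < h.+1)%N))).
Qed.

Lemma bernoulli_ineq (R : realFieldType) (x : R) n :
  0 <= x <= 1 -> 1 - n%:R * x <= (1 - x) ^+ n.
Proof.
move=> /andP[x0 x1]; elim: n => [|n IH]; first by rewrite mul0r subr0 expr0.
have h : (1 - x) * (1 - n%:R * x) <= (1 - x) * (1 - x) ^+ n.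
  by apply: ler_wpM2l; rewrite ?subr_ge0.
have hn : 0 <= n%:R * x :> R by rewrite mulr_ge0.
rewrite exprS -natr1; nra.
Qed.

Lemma geom_sum_expn_le2 (R : realFieldType) (x : R) M n :
  0 <= x -> 2 * n%:R * x <= 1 -> (\sum_(k < M) x ^+ k) ^+ n <= 2.
Proof.
move=> x0 hx; case: n hx => [|n] hx; first by rewrite expr0; lra.
have x_le_half : x <= 1 / 2.
  have : 0 <= (n.+1%:R - 1) * x by rewrite mulr_ge0 // subr_ge0 ler1n.
  nra.
set g := \sum_(k < M) x ^+ k.
have g_ge0 : 0 <= g by apply: sumr_ge0 => k _; rewrite exprn_ge0.
(* [(1 - x) g = 1 - x^M <= 1] and, by Bernoulli, [(1 - x)^(n+1) >= 1/2]. *)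
have hg : ((1 - x) * g) ^+ n.+1 <= 1.
  have -> : (1 - x) * g = 1 - x ^+ M by rewrite /g -opprB mulNr -subrX1; ring.
  by rewrite exprn_ile1 // ?subr_ge0 ?gerBl ?exprn_ge0 ?exprn_ile1 //; lra.
have x_le1 : x <= 1 by lra.
have hb := @bernoulli_ineq _ x n.+1 (introT andP (conj x0 x_le1)).
have h1 : g ^+ n.+1 * (1 / 2) <= g ^+ n.+1 * (1 - x) ^+ n.+1.
  by apply: ler_wpM2l; [rewrite exprn_ge0 | apply: le_trans _ hb; lra].
have : 0 <= g ^+ n.+1 by rewrite exprn_ge0.
rewrite exprMn mulrC in hg; lra.
Qed.

Section WeightedCoefficients.
Variable R : realType.
Local Notation C := R[i].

Lemma weighted_coef_bound_propagate (p K : nat -> C) (rho S : R) (i M : nat) :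
  0 < rho -> 0 <= S -> K 0%N = 1 ->
  (forall n, (i <= n < M)%N -> \sum_(k < n.+1) p (n - k)%N * K k = 0) ->
  \sum_(k < M) modC (K k) * rho ^+ k <= 2 ->
  (forall m, (m < i)%N -> modC (p m) * rho ^+ m <= S) ->
  forall n, (n < M)%N -> modC (p n) * rho ^+ n <= S.
Proof.
move=> rho_gt0 S_ge0 K0 p_rec K_small p_low n.
have wK_ge0 k : 0 <= modC (K k) * rho ^+ k.
  by rewrite mulr_ge0 ?modC_ge0 ?exprn_ge0 ?ltW.
elim/ltn_ind: n => n IH nM.
have [ni|ni] := ltnP n i; first exact: p_low.
have pn : p n = - \sum_(k < n) p (n - k.+1)%N * K k.+1.
  apply/eqP; rewrite -addr_eq0; apply/eqP.
  by move: (p_rec n); rewrite ni nM big_ord_recl /= subn0 K0 mulr1 => /(_ isT).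
have tail_le1 : \sum_(k < n) modC (K k.+1) * rho ^+ k.+1 <= 1.
  have := ler_sum_ord_prefix nM wK_ge0.
  rewrite big_ord_recl /= K0 modC1 expr0 mulr1 => h; lra.
rewrite pn modCN.
apply: le_trans (ler_wpM2r (exprn_ge0 n (ltW rho_gt0)) (modC_sum _ _ _)) _.
rewrite mulr_suml.
apply: (@le_trans _ _ (\sum_(k < n) S * (modC (K k.+1) * rho ^+ k.+1))); last first.
  by rewrite -mulr_sumr -[X in _ <= X]mulr1 ler_wpM2l.
apply: ler_sum => k _.
have kn := ltn_ord k.
have -> : rho ^+ n = rho ^+ (n - k.+1) * rho ^+ k.+1 by rewrite -exprD subnK.
rewrite modCM mulrACA ler_wpM2r //.
by apply: IH; lia.
Qed.

Definition geom_poly (u : C) (M : nat) : {poly C} := \poly_(k < M) u ^+ k.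

Lemma geom_poly_telescope (u : C) M :
  (1 - u%:P * 'X) * geom_poly u M = 1 - (u ^+ M)%:P * 'X^M.
Proof.
rewrite /geom_poly; elim: M => [|M IH].
  by rewrite poly_def big_ord0 mulr0 expr0 expr0 mul1r subrr.
rewrite poly_def big_ord_recr /= -poly_def mulrDr IH -mul_polyC.
rewrite !exprS rmorphM /= rmorphXn /=; ring.
Qed.

Lemma XsubC_geom_poly (v : C) M : v != 0 ->
  ('X - v%:P) * geom_poly v^-1 M = (- v)%:P * (1 - ((v^-1) ^+ M)%:P * 'X^M).
Proof.
move=> v0; rewrite -geom_poly_telescope mulrA; congr (_ * _).
rewrite mulrBr mulr1 mulrA -rmorphM /= mulNr mulfV // polyCN; ring.
Qed.

Lemma prod_1subXn_expansion (I : Type) (s : seq I) (a b : I -> C) M :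
  exists E : {poly C}, \prod_(v <- s) ((a v)%:P * (1 - (b v)%:P * 'X^M))
     = (\prod_(v <- s) a v)%:P + 'X^M * E.
Proof.
elim: s => [|v s [E IH]]; first by exists 0; rewrite !big_nil mulr0 addr0.
exists ((a v)%:P * E - (a v * b v)%:P * ((\prod_(v <- s) a v)%:P + 'X^M * E)).
rewrite !big_cons IH rmorphM /= rmorphM /=; ring.
Qed.

Definition majorant (F : {poly C}) (Ft : {poly R}) :=
  (forall k, modC F`_k <= Ft`_k) /\ (forall k, 0 <= Ft`_k).

Lemma majorantM F G Ft Gt :
  majorant F Ft -> majorant G Gt -> majorant (F * G) (Ft * Gt).
Proof.
move=> [hF hF0] [hG hG0]; split => k; rewrite !coefM; last first.
  by apply: sumr_ge0 => j _; rewrite mulr_ge0.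
apply: le_trans (modC_sum _ _ _) _; apply: ler_sum => j _.
by rewrite modCM ler_pM ?modC_ge0.
Qed.

Lemma majorant1 : majorant 1 1.
Proof. by split => k; rewrite !coefC; case: (k == 0)%N; rewrite ?modC1 ?modC0. Qed.

Lemma majorant_geom_poly (v : C) (mu : R) M : 0 < mu -> mu <= modC v ->
  majorant (geom_poly v^-1 M) (\poly_(k < M) (mu^-1) ^+ k).
Proof.
move=> mu0 muv; have v0 : 0 < modC v by apply: lt_le_trans muv.
split => k; rewrite /geom_poly !coef_poly; case: (k < M)%N; rewrite ?modC0 //.
  rewrite modCX modCV; apply: lerXn2r; rewrite ?nnegrE ?invr_ge0 ?(ltW mu0) ?(ltW v0) //.
  by rewrite lef_pV2 ?posrE.
by rewrite exprn_ge0 // invr_ge0 ltW.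
Qed.

Lemma majorant_prod_geom_poly (s : seq C) (mu : R) M :
  0 < mu -> (forall v, v \in s -> mu <= modC v) ->
  majorant (\prod_(v <- s) geom_poly v^-1 M)
           ((\poly_(k < M) (mu^-1) ^+ k) ^+ size s).
Proof.
move=> mu0; elim: s => [|v s IH] hs; first by rewrite big_nil expr0; exact: majorant1.
rewrite big_cons exprS; apply: majorantM.
  by apply: majorant_geom_poly => //; apply: hs; rewrite mem_head.
by apply: IH => w ws; apply: hs; rewrite in_cons ws orbT.
Qed.

(* Multiplying [P] by the truncated expansion [K] of [1 / prod (1 - X/v)]
   kills the factors [X - v] modulo [X^M], so the coefficients of [K * P]
   vanish in degrees [i <= n < M]; the roots being large, [K] is small at
   [rho], and [weighted_coef_bound_propagate] applies. *)
Lemma weighted_coef_bound_large_roots (P A : {poly C}) (s : seq C) (i : nat)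
    (mu rho S : R) :
  0 < mu -> 0 < rho -> (forall v, v \in s -> mu <= modC v) ->
  2 * (size s)%:R * rho <= mu -> (size A <= i)%N ->
  P = A * \prod_(v <- s) ('X - v%:P) -> 0 <= S ->
  (forall m, (m < i)%N -> modC P`_m * rho ^+ m <= S) ->
  forall n, modC P`_n * rho ^+ n <= S.
Proof.
move=> mu0 rho0 s_large rho_small sizeA hP S0 P_low n.
have s_neq0 v : v \in s -> v != 0.
  by move=> /s_large; apply: contraTneq => ->; rewrite modC0 -ltNge.
pose M := n.+1.
pose K := \prod_(v <- s) geom_poly v^-1 M.
apply: (@weighted_coef_bound_propagate (fun k => P`_k) (fun k => K`_k) rho S i M) => //.
- rewrite -horner_coef0 horner_prod big1 // => v _.
  by rewrite horner_coef0 /geom_poly coef_poly /= expr0.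
- move=> m /andP[im mM].
  have -> : \sum_(k < m.+1) P`_(m - k) * K`_k = (K * P)`_m.
    by rewrite coefM; apply: eq_bigr => k _; rewrite mulrC.
  have -> : K * P = A * \prod_(v <- s) ((- v)%:P * (1 - ((v^-1) ^+ M)%:P * 'X^M)).
    rewrite hP mulrCA; congr (_ * _); rewrite mulrC -big_split /=.
    by apply: eq_big_seq => v vs; rewrite XsubC_geom_poly // s_neq0.
  have [E ->] := prod_1subXn_expansion s (fun v => - v) (fun v => (v^-1) ^+ M) M.
  rewrite mulrDr coefD coefMC nth_default ?(leq_trans sizeA) // mul0r add0r.
  by rewrite mulrCA coefXnM mM.
- have [K_maj Kt_ge0] := majorant_prod_geom_poly M mu0 s_large.
  set Kt := _ ^+ size s in K_maj Kt_ge0.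
  apply: (@le_trans _ _ (\sum_(k < M) Kt`_k * rho ^+ k)).
    by apply: ler_sum => k _; rewrite ler_wpM2r ?exprn_ge0 ?(ltW rho0).
  apply: (@le_trans _ _ Kt.[rho]).
    rewrite (@horner_coef_wide _ (maxn M (size Kt))) ?leq_maxr //.
    apply: (@ler_sum_ord_prefix _ (fun k => Kt`_k * rho ^+ k)); first exact: leq_maxl.
    by move=> k; rewrite mulr_ge0 // exprn_ge0 // ltW.
  rewrite /Kt horner_exp horner_poly.
  under eq_bigr do rewrite -exprMn mulrC.
  apply: geom_sum_expn_le2; first by rewrite divr_ge0 ?ltW.
  by rewrite mulrA ler_pdivrMr // mul1r.
Qed.

Lemma weighted_coef_argmax_lt (P A : {poly C}) (s : seq C) (i : nat) (mu rho : R) :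
  0 < mu -> 0 < rho -> (forall v, v \in s -> mu <= modC v) ->
  2 * (size s)%:R * rho <= mu -> (0 < i)%N -> (size A <= i)%N ->
  P = A * \prod_(v <- s) ('X - v%:P) ->
  exists2 n, (n < i)%N & forall k, modC P`_k * rho ^+ k <= modC P`_n * rho ^+ n.
Proof.
move=> mu0 rho0 s_large rho_small i_gt0 sizeA hP.
have [n ni nmax] := exists_argmax_nat (fun k => modC P`_k * rho ^+ k) i.-1.
exists n; first lia.
apply: (weighted_coef_bound_large_roots mu0 rho0 s_large rho_small sizeA hP).
  by rewrite mulr_ge0 ?modC_ge0 ?exprn_ge0 ?ltW.
by move=> m mi; apply: nmax; lia.
Qed.

Lemma coef_prod_1subCX (s : seq C) k :
  (\prod_(w <- s) (1 - w%:P * 'X))`_k =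
  if (k <= size s)%N then (\prod_(w <- s) ('X - w%:P))`_(size s - k) else 0.
Proof.
elim: s k => [|w s IH] k; first by rewrite !big_nil; case: k => [|k]; rewrite !coef1.
rewrite !big_cons /= mulrBl mul1r -mulrA coefB coefCM coefXM.
rewrite mulrBl coefB coefXM coefCM.
set n := size s.
have Qn : (\prod_(w <- s) ('X - w%:P))`_n.+1 = 0.
  by rewrite nth_default // size_prod_XsubC.
case: k => [|k] /=; first by rewrite !IH /= !subn0 -/n Qn !mulr0 !subr0.
rewrite !IH -/n subSS ltnS.
case: (ltngtP k n) => [kn|nk|->].
- by rewrite -subnS; have -> : ((n - k)%N == 0%N) = false by apply/negbTE; lia.
- by rewrite mulr0 subr0.
- by rewrite subnn eqxx.
Qed.

Lemma polyCN_mul_XsubC_inv (w : C) : w != 0 ->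
  (- w)%:P * ('X - (w^-1)%:P) = 1 - w%:P * 'X.
Proof. by move=> w0; rewrite mulrBr -rmorphM /= mulNr mulfV // !polyCN; ring. Qed.

Section Reversal.
Variables (c : C) (W : seq C).
Hypothesis W_neq0 : forall w, w \in W -> w != 0.
Local Notation d := (size W).
Local Notation P := (c *: \prod_(w <- W) ('X - w%:P)).

(* The reciprocal polynomial [x^d P(1/x)], whose roots are the [1/w]. *)
Let Prev := (c * \prod_(w <- W) (- w)) *: \prod_(w <- W) ('X - (w^-1)%:P).

Let coef_Prev m : (m <= d)%N -> Prev`_m = P`_(d - m).
Proof.
move=> md; rewrite /Prev -scalerA [LHS]coefZ [RHS]coefZ; congr (_ * _).
have -> : (\prod_(w <- W) - w) *: \prod_(w <- W) ('X - (w^-1)%:P)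
          = \prod_(w <- W) (1 - w%:P * 'X).
  rewrite -mul_polyC rmorph_prod /= -big_split /=.
  by apply: eq_big_seq => w wW; rewrite polyCN_mul_XsubC_inv // W_neq0.
by rewrite coef_prod_1subCX md.
Qed.

Let weight_Prev (rho : R) m : 0 < rho -> (m <= d)%N ->
  modC P`_m * rho ^+ m = rho ^+ d * (modC Prev`_(d - m) * rho^-1 ^+ (d - m)).
Proof.
move=> rho0 md; rewrite coef_Prev ?leq_subr // subKn //.
have -> : rho ^+ d = rho ^+ (d - m) * rho ^+ m by rewrite -exprD subnK.
by rewrite exprVn; field; rewrite expf_neq0 // gt_eqF.
Qed.

Lemma weighted_coef_argmax_ge (i : nat) (mu rho : R) :
  (0 < i <= d)%N -> 0 < mu -> (forall w, w \in take i W -> modC w <= mu) ->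
  2 * i%:R * mu <= rho ->
  exists2 n, (i <= n <= d)%N &
    forall k, (k <= d)%N -> modC P`_k * rho ^+ k <= modC P`_n * rho ^+ n.
Proof.
move=> /andP[i_gt0 id] mu0 W_small rho_large.
have rho0 : 0 < rho by apply: lt_le_trans rho_large; rewrite !mulr_gt0 ?ltr0n.
pose A := (c * \prod_(w <- W) (- w)) *: \prod_(w <- drop i W) ('X - (w^-1)%:P).
have sizeA : (size A <= d - i + 1)%N.
  by rewrite (leq_trans (size_scale_leq _ _)) // size_prod_XsubC size_drop addn1.
have hPrev : Prev = A * \prod_(v <- map GRing.inv (take i W)) ('X - v%:P).
  rewrite /Prev /A -scalerAl big_map; congr (_ *: _).
  by rewrite mulrC -big_cat /= cat_take_drop.
have roots_large v : v \in map GRing.inv (take i W) -> mu^-1 <= modC v.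
  move=> /mapP[w wt ->]; rewrite modCV lef_pV2 ?posrE ?W_small //.
  by apply/modC_gt0/W_neq0/(mem_take wt).
have rho_small : 2 * (size (map GRing.inv (take i W)))%:R * rho^-1 <= mu^-1.
  rewrite size_map size_takel // -(ler_pM2r (mulr_gt0 mu0 rho0)).
  have -> : 2 * i%:R * rho^-1 * (mu * rho) = 2 * i%:R * mu.
    by field; rewrite gt_eqF.
  by have -> : mu^-1 * (mu * rho) = rho by field; rewrite gt_eqF.
have [muV0 rhoV0] : 0 < mu^-1 /\ 0 < rho^-1 by rewrite !invr_gt0.
have i'_gt0 : (0 < d - i + 1)%N by rewrite addn1.
have [n n_lt Prev_max] := weighted_coef_argmax_lt muV0 rhoV0 roots_large rho_small
  i'_gt0 sizeA hPrev.
exists (d - n)%N; first by apply/andP; split; lia.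
move=> k kd; rewrite !weight_Prev ?leq_subr // subKn; last by lia.
by rewrite ler_wpM2l ?exprn_ge0 ?(ltW rho0).
Qed.

End Reversal.

End WeightedCoefficients.

Section GraeffeFactorization.
Variable R : realType.
Local Notation C := R[i].

Lemma even_poly_comp_X2 (q : {poly C}) : even_poly (q \Po 'X^2) = q.
Proof.
apply/polyP => i; rewrite coef_even_poly coef_comp_poly_Xn //.
by rewrite -muln2 dvdn_mull // mulnK.
Qed.

Lemma prod_XsubC_mul_NXsubC (s : seq C) :
  \prod_(z <- s) (('X - z%:P) * (- 'X - z%:P)) =
  (-1) ^+ size s *: ((\prod_(z <- s) ('X - (z ^+ 2)%:P)) \Po 'X^2).
Proof.
elim: s => [|z s IH]; first by rewrite !big_nil expr0 scale1r comp_polyC.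
rewrite !big_cons IH comp_polyM comp_polyB comp_polyX comp_polyC /= [(-1) ^+ _.+1]exprS.
rewrite -!mul_polyC !(rmorphM, rmorphXn, rmorphN, rmorph1) /=; ring.
Qed.

Lemma graeffe_scale_prod_XsubC (c : C) (s : seq C) : c != 0 ->
  graeffe (c *: \prod_(z <- s) ('X - z%:P)) =
  c ^+ 2 *: \prod_(z <- s) ('X - (z ^+ 2)%:P).
Proof.
move=> c0; rewrite /graeffe size_scale // size_prod_XsubC /=.
rewrite comp_polyZ -scalerAl -scalerAr scalerA -expr2.
have -> : (\prod_(z <- s) ('X - z%:P)) \Po - 'X = \prod_(z <- s) (- 'X - z%:P).
  elim: s {c0} => [|z s IH]; first by rewrite !big_nil comp_polyC.
  by rewrite !big_cons comp_polyM IH comp_polyB comp_polyX comp_polyC.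
rewrite -big_split /= prod_XsubC_mul_NXsubC scalerA even_polyZ even_poly_comp_X2.
rewrite scalerA; congr (_ *: _).
rewrite mulrCA -exprMn exprMn -exprM mulnC exprM sqrrN expr1n.
by rewrite expr1n mulr1.
Qed.

Lemma graeffeN_scale_prod_XsubC (c : C) (s : seq C) N : c != 0 ->
  graeffeN N (c *: \prod_(z <- s) ('X - z%:P)) =
  c ^+ (2 ^ N) *: \prod_(z <- s) ('X - (z ^+ (2 ^ N))%:P).
Proof.
move=> c0; elim: N => [|N IH]; first by rewrite /= !expr1.
rewrite /graeffeN iterS -/(graeffeN N _) IH.
rewrite -(big_map (fun z => z ^+ (2 ^ N)) xpredT (fun w => 'X - w%:P)).
rewrite graeffe_scale_prod_XsubC ?expf_neq0 // big_map -exprM expnSr.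
by congr (_ *: _); apply: eq_bigr => z _; rewrite -exprM.
Qed.

End GraeffeFactorization.

Section ConvexSlopes.
Variables (R : realType) (d : nat) (c : R -> R) (m t : R).
Hypotheses (c_convex : convex_on d c)
           (c_ge_line : forall y, 0 <= y <= d%:R -> m + y * t <= c y).

Lemma convex_slope_le_line (j n : nat) : (j < n <= d)%N ->
  c n%:R <= m + n%:R * t -> c j.+1%:R - c j%:R <= t.
Proof.
move=> /andP[j_lt_n n_le_d] c_touch.
set x := j%:R : R; set y := n%:R : R.
have yx_ge1 : 1 <= y - x by rewrite -natrB ?ler1n ?subn_gt0 // ltnW.
have yx_gt0 : 0 < y - x := lt_le_trans ltr01 yx_ge1.
set s := (y - x)^-1.
have s01 : 0 <= s <= 1 by rewrite invr_ge0 (ltW yx_gt0) invf_le1.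
have -> : j.+1%:R = (1 - s) * x + s * y.
  by rewrite -natr1 -/x /s; field; exact: lt0r_neq0 yx_gt0.
have hx : 0 <= x <= d%:R by rewrite ler0n ler_nat; lia.
have hy : 0 <= y <= d%:R by rewrite ler0n ler_nat.
have conv := c_convex hx hy s01.
have gap : s * (c y - c x) <= s * ((y - x) * t).
  by rewrite ler_wpM2l //; have := c_ge_line hx; rewrite /y; lra.
have e : s * ((y - x) * t) = t by rewrite mulrA mulVf ?mul1r // gt_eqF.
lra.
Qed.

Lemma convex_slope_ge_line (j n : nat) : (n <= j < d)%N ->
  c n%:R <= m + n%:R * t -> t <= c j.+1%:R - c j%:R.
Proof.
move=> /andP[n_le_j j_lt_d] c_touch.
set x := n%:R : R; set y := j.+1%:R : R.
have yx_ge1 : 1 <= y - x by rewrite -natrB ?ler1n ?subn_gt0 // ltnW.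
have yx_gt0 : 0 < y - x := lt_le_trans ltr01 yx_ge1.
set s := (y - x)^-1.
have s01 : 0 <= 1 - s <= 1.
  by rewrite subr_ge0 invf_le1 // yx_ge1 gerBl invr_ge0 (ltW yx_gt0).
have -> : j%:R = (1 - (1 - s)) * x + (1 - s) * y.
  have y_eq : y = j%:R + 1 by rewrite natr1.
  by rewrite /s y_eq; field; rewrite -y_eq; exact: lt0r_neq0 yx_gt0.
have hx : 0 <= x <= d%:R by rewrite ler0n ler_nat; lia.
have hy : 0 <= y <= d%:R by rewrite ler0n ler_nat.
have conv := c_convex hx hy s01.
have gap : s * ((y - x) * t) <= s * (c y - c x).
  by rewrite ler_wpM2l //; have := c_ge_line hy; rewrite /x; lra.
have e : s * ((y - x) * t) = t by rewrite mulrA mulVf ?mul1r // gt_eqF.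
rewrite -/s in s01; lra.
Qed.

End ConvexSlopes.

Section ConvexHull.
Variables (R : realType) (d : nat) (a : nat -> \bar R).
Local Notation phi := (convex_hull d (pl_interp a)).

Lemma pl_interp_nat k : pl_interp a k%:R = a k.
Proof. by rewrite /pl_interp natrK subrr eqxx. Qed.

Lemma pl_interp_ge_line (m t : R) :
  (forall k, (k <= d)%N -> ((m + k%:R * t)%:E <= a k)%E) ->
  forall y, 0 <= y <= d%:R -> ((m + y * t)%:E <= pl_interp a y)%E.
Proof.
move=> a_ge y /andP[y0 yd]; rewrite /pl_interp.
set j := Num.truncn y; have /andP[jy yj] := truncn_itv y0; rewrite -/j in jy yj.
set th := y - j%:R.
have [th0|th_neq0] := eqVneq th 0.
  have -> : y = j%:R by apply/eqP; rewrite -subr_eq0 -/th th0.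
  by apply: a_ge; rewrite -(ler_nat R) (le_trans jy yd).
have th_gt0 : 0 < th by rewrite lt_def th_neq0 subr_ge0.
have th_lt1 : th < 1 by rewrite /th -natr1 in yj *; lra.
have jd : (j.+1 <= d)%N by rewrite -(ltr_nat R) (lt_le_trans _ yd) // -subr_gt0.
have h1 := lee_wpmul2l (x := (1 - th)%:E) (ltac:(by rewrite lee_fin subr_ge0 ltW))
  (a_ge j (ltnW jd)).
have h2 := lee_wpmul2l (x := th%:E) (ltac:(by rewrite lee_fin ltW)) (a_ge j.+1 jd).
apply: le_trans (leeD h1 h2); rewrite -!EFinM -EFinD lee_fin.
have -> : y = j%:R + th by rewrite /th addrC subrK.
by rewrite -natr1 le_eqVlt; apply/orP; left; apply/eqP; ring.
Qed.

Lemma convex_hull_le_node k : (k <= d)%N -> (phi k%:R <= a k)%E.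
Proof.
move=> kd; apply: ge_ereal_sup => _ [c [_ c_le] <-].
by rewrite -pl_interp_nat; apply: c_le; rewrite ler0n ler_nat.
Qed.

Lemma convex_hull_ge_line (m t : R) :
  (forall k, (k <= d)%N -> ((m + k%:R * t)%:E <= a k)%E) ->
  forall y, 0 <= y <= d%:R -> ((m + y * t)%:E <= phi y)%E.
Proof.
move=> a_ge y hy; apply: ereal_sup_ubound; exists (fun y => m + y * t) => //.
split; last exact: pl_interp_ge_line.
by move=> x z s _ _ _; rewrite le_eqVlt; apply/orP; left; apply/eqP; ring.
Qed.

Section Finite.
Hypotheses (d_gt0 : (0 < d)%N) (a0_fin : a 0 \is a fin_num) (ad_fin : a d \is a fin_num)
  (a_bounded_below : exists m t, forall k, (k <= d)%N -> ((m + k%:R * t)%:E <= a k)%E).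

Lemma convex_hull_le_chord y : 0 <= y <= d%:R ->
  (phi y <= ((1 - y / d%:R) * fine (a 0) + (y / d%:R) * fine (a d))%:E)%E.
Proof.
move=> /andP[y0 yd]; apply: ge_ereal_sup => _ [c [c_convex c_le] <-].
have d_pos : 0 < d%:R :> R by rewrite ltr0n.
set th := y / d%:R.
have th01 : 0 <= th <= 1 by rewrite /th divr_ge0 ?(ltW d_pos) //= ler_pdivrMr // mul1r.
have -> : y = (1 - th) * 0 + th * d%:R by rewrite mulr0 add0r /th divfK // gt_eqF.
have c_le_fine k : (k <= d)%N -> a k \is a fin_num -> c k%:R <= fine (a k).
  move=> kd ak; rewrite -lee_fin fineK // -pl_interp_nat.
  by apply: c_le; rewrite ler0n ler_nat.
rewrite lee_fin; apply: le_trans (c_convex 0 d%:R th _ _ th01) _.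
- by rewrite lexx ler0n.
- by rewrite lexx ler0n.
have /andP[th0 th1] := th01.
have c0 := c_le_fine 0%N (leq0n d) a0_fin.
have cd := c_le_fine d (leqnn d) ad_fin.
by rewrite lerD // ler_wpM2l ?subr_ge0.
Qed.

Lemma convex_hull_fin y : 0 <= y <= d%:R -> phi y \is a fin_num.
Proof.
move=> hy; have [m [t a_ge]] := a_bounded_below.
have := convex_hull_ge_line a_ge hy; have := convex_hull_le_chord hy.
by case: (phi y).
Qed.

Lemma convex_hull_convex : convex_on d (fun y => fine (phi y)).
Proof.
move=> x y s hx hy /andP[s0 s1].
have hz : 0 <= (1 - s) * x + s * y <= d%:R.
  move: hx hy => /andP[x0 xd] /andP[y0 yd].
  by rewrite addr_ge0 ?mulr_ge0 ?subr_ge0 //=; nra.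
rewrite -lee_fin fineK ?convex_hull_fin //.
apply: ge_ereal_sup => _ [c [c_convex c_le] <-]; rewrite lee_fin.
apply: le_trans (c_convex x y s hx hy (introT andP (conj s0 s1))) _.
have c_le_phi z : 0 <= z <= d%:R -> c z <= fine (phi z).
  move=> hz'; rewrite -lee_fin fineK ?convex_hull_fin //.
  by apply: ereal_sup_ubound; exists c.
by rewrite lerD // ler_wpM2l ?subr_ge0 ?c_le_phi.
Qed.

End Finite.
End ConvexHull.

Lemma cvg_geometric_error (R : realType) (u : nat -> R) (l L : R) :
  (forall N, `|u N - l| <= 2 ^- N * L) -> u N @[N --> \oo] --> l.
Proof.
move=> u_near.
have err_cvg0 : (fun N : nat => 2 ^- N * L) @ \oo --> (0 : R).
  have half_lt1 : `|(2 : R)^-1| < 1 by rewrite ger0_norm ?invf_lt1 ?ltr1n.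
  have := cvgMr_tmp (b := L) (cvg_expr half_lt1); rewrite mul0r.
  have -> : (fun N : nat => 2 ^- N * L) = (fun N => (2^-1) ^+ N * L).
    by apply: funext => N; rewrite exprVn.
  by apply.
apply: (@squeeze_cvgr _ _ _ _ (fun N => l - 2 ^- N * L) (fun N => l + 2 ^- N * L)).
- by near=> N; rewrite -ler_distl u_near.
- by rewrite -[X in _ --> X]subr0; apply: cvgB => //; exact: cvg_cst.
- by rewrite -[X in _ --> X]addr0; apply: cvgD => //; exact: cvg_cst.
Unshelve. all: by end_near.
Qed.

Section RenormalizedNewtonDiagram.
Variables (R : realType) (f : {poly R[i]}) (d : nat) (zeta : seq R[i]).
Hypotheses (size_f : size f = d.+1) (f0_neq0 : f.[0] != 0)
  (size_zeta : size zeta = d)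
  (f_factor : f = lead_coef f *: \prod_(z <- zeta) ('X - z%:P)).

Local Notation g N := (graeffeN N f).
Local Notation W N := (map (fun z => z ^+ (2 ^ N)) zeta).
Local Notation c N := (lead_coef f ^+ (2 ^ N)).

Let lead_coef_neq0 : lead_coef f != 0.
Proof. by rewrite lead_coef_eq0 -size_poly_eq0 size_f. Qed.

Let zeta_neq0 z : z \in zeta -> z != 0.
Proof.
move=> z_in; apply: contraNneq f0_neq0 => z0.
rewrite f_factor hornerZ horner_prod (big_rem z z_in) /= z0 hornerXsubC subrr.
by rewrite mul0r mulr0.
Qed.

Let c_neq0 N : c N != 0. Proof. by rewrite expf_neq0. Qed.

Let W_neq0 N w : w \in W N -> w != 0.
Proof. by move=> /mapP[z z_in ->]; rewrite expf_neq0 // zeta_neq0. Qed.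

Let size_W N : size (W N) = d. Proof. by rewrite size_map. Qed.

Lemma graeffeN_factor N : g N = c N *: \prod_(w <- W N) ('X - w%:P).
Proof. by rewrite {1}f_factor graeffeN_scale_prod_XsubC // big_map. Qed.

Lemma graeffeN_coef_last N : (g N)`_d = c N.
Proof.
rewrite graeffeN_factor coefZ.
have /monicP := monic_prod_XsubC (W N) xpredT (fun w => w).
by rewrite lead_coefE size_prod_XsubC size_W /= => ->; rewrite mulr1.
Qed.

Lemma graeffeN_coef0_neq0 N : (g N)`_0 != 0.
Proof.
rewrite -horner_coef0 graeffeN_factor hornerZ horner_prod mulf_neq0 ?expf_neq0 //.
rewrite prodf_seq_neq0; apply/allP => w w_in /=.
by rewrite hornerXsubC sub0r oppr_eq0 (W_neq0 w_in).
Qed.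

Lemma rnode_supporting_line N n (rho : R) : 0 < rho ->
  (forall k, (k <= d)%N -> modC (g N)`_k * rho ^+ k <= modC (g N)`_n * rho ^+ n) ->
  exists m, (forall k, (k <= d)%N ->
               ((m + k%:R * (2 ^- N * ln rho))%:E <= rnode f N k)%E)
         /\ rnode f N n = (m + n%:R * (2 ^- N * ln rho))%:E.
Proof.
move=> rho0 n_max.
have gn_neq0 : (g N)`_n != 0.
  apply: contraTneq (n_max d (leqnn d)) => ->; rewrite modC0 mul0r -ltNge.
  by rewrite mulr_gt0 ?exprn_gt0 ?modC_gt0 // graeffeN_coef_last.
have w_ge0 : 0 <= 2 ^- N :> R by rewrite invr_ge0 exprn_ge0.
exists (- (2 ^- N) * ln (modC (g N)`_n) - n%:R * (2 ^- N * ln rho)).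
split; last by rewrite /rnode (negbTE gn_neq0); congr EFin; ring.
move=> k kd; rewrite /rnode; case: eqP => [_|/eqP gk_neq0]; first exact: leey.
rewrite lee_fin.
have := n_max k kd.
rewrite -ler_ln ?posrE ?mulr_gt0 ?exprn_gt0 ?modC_gt0 //.
have [gk_pos gn_pos] : 0 < modC (g N)`_k /\ 0 < modC (g N)`_n by rewrite !modC_gt0.
rewrite !lnM ?posrE ?exprn_gt0 // !lnXn //.
rewrite -[ln rho *+ k]mulr_natr -[ln rho *+ n]mulr_natr => ln_le.
have := ler_wpM2l w_ge0 ln_le.
lra.
Qed.

Lemma rnode_fin N : rnode f N 0 \is a fin_num /\ rnode f N d \is a fin_num.
Proof.
rewrite /rnode graeffeN_coef_last (negbTE (graeffeN_coef0_neq0 N)).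
by rewrite (negbTE (c_neq0 N)).
Qed.

Lemma rnd_hull N : rnd f N = convex_hull d (pl_interp (rnode f N)).
Proof. by rewrite /rnd size_f. Qed.

Section Slopes.
Variable j : nat.
Hypotheses (j_lt_d : (j < d)%N)
  (zeta_sorted : sorted (fun z w => modC z <= modC w) zeta).

Let mu := modC zeta`_j.

Let mu_gt0 : 0 < mu.
Proof. by apply/modC_gt0/zeta_neq0; rewrite mem_nth // size_zeta. Qed.

Let muN_gt0 N : 0 < mu ^+ (2 ^ N). Proof. by rewrite exprn_gt0. Qed.

Let ln_muN N : 2 ^- N * ln (mu ^+ (2 ^ N)) = ln mu.
Proof.
by rewrite lnXn // -[ln mu *+ _]mulr_natr natrX mulrCA mulVf ?mulr1 // expf_neq0.
Qed.

Let modC_W N k : (k < d)%N -> modC (W N)`_k = modC zeta`_k ^+ (2 ^ N).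
Proof. by move=> kd; rewrite (nth_map 0) ?size_zeta // modCX. Qed.

Let zeta_le k l : (k <= l < d)%N -> modC zeta`_k <= modC zeta`_l.
Proof.
move=> /andP[kl ld].
have := sorted_leq_nth (leT := fun z w : R[i] => modC z <= modC w)
  (fun _ _ _ h1 h2 => le_trans h1 h2) (fun z => lexx (modC z)) 0 zeta_sorted.
by apply; rewrite // inE size_zeta //; lia.
Qed.

Let W_small N w : w \in take j.+1 (W N) -> modC w <= mu ^+ (2 ^ N).
Proof.
move=> /(nthP 0)[k]; rewrite size_takel ?size_W // => k_le_j <-.
rewrite nth_take // modC_W; last by lia.
by apply: lerXn2r; rewrite ?nnegrE ?modC_ge0 ?(ltW mu_gt0) // zeta_le //; lia.
Qed.

Let W_large N w : w \in drop j (W N) -> mu ^+ (2 ^ N) <= modC w.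
Proof.
move=> /(nthP 0)[k]; rewrite size_drop size_W => kd <-.
rewrite nth_drop modC_W; last by lia.
by apply: lerXn2r; rewrite ?nnegrE ?modC_ge0 ?(ltW mu_gt0) // zeta_le //; lia.
Qed.

Let two_d_gt0 : 0 < 2 * d%:R :> R.
Proof. by rewrite mulr_gt0 // ltr0n; lia. Qed.

Let rnode_bounded_below N : exists m t, forall k, (k <= d)%N ->
  ((m + k%:R * t)%:E <= rnode f N k)%E.
Proof.
have [n _ n_max] := exists_argmax_nat (fun k => modC (g N)`_k) d.
have n_max1 k : (k <= d)%N ->
    modC (g N)`_k * 1 ^+ k <= modC (g N)`_n * 1 ^+ n.
  by move=> kd; rewrite !expr1n !mulr1 n_max.
have [m [m_le _]] := rnode_supporting_line ltr01 n_max1.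
by exists m, (2 ^- N * ln 1).
Qed.

Let rnd_fin N y : 0 <= y <= d%:R -> rnd f N y \is a fin_num.
Proof.
move=> hy; have [r0 rd] := rnode_fin N; rewrite rnd_hull.
by apply: convex_hull_fin hy => //; lia.
Qed.

Let rnd_convex N : convex_on d (fun y => fine (rnd f N y)).
Proof.
have [r0 rd] := rnode_fin N; rewrite rnd_hull.
by apply: convex_hull_convex => //; lia.
Qed.

Let rnd_ge_line N m t :
  (forall k, (k <= d)%N -> ((m + k%:R * t)%:E <= rnode f N k)%E) ->
  forall y, 0 <= y <= d%:R -> m + y * t <= fine (rnd f N y).
Proof.
move=> r_ge y hy; rewrite -lee_fin fineK ?rnd_fin // rnd_hull.
exact: convex_hull_ge_line.
Qed.

Let rnd_le_node N n r : (n <= d)%N -> rnode f N n = r%:E ->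
  fine (rnd f N n%:R) <= r.
Proof.
move=> nd rn; rewrite -lee_fin fineK ?rnd_fin ?ler0n ?ler_nat // rnd_hull -rn.
exact: convex_hull_le_node.
Qed.

Lemma rnd_slope_le N :
  fine (rnd f N j.+1%:R) - fine (rnd f N j%:R) <= ln mu + 2 ^- N * ln (2 * d%:R).
Proof.
set rho := 2 * d%:R * mu ^+ (2 ^ N).
have rho_gt0 : 0 < rho by rewrite mulr_gt0.
have j_range : (0 < j.+1 <= size (W N))%N by rewrite size_W.
have rho_large : 2 * j.+1%:R * mu ^+ (2 ^ N) <= rho.
  by rewrite /rho ler_wpM2r ?exprn_ge0 ?(ltW mu_gt0) // ler_wpM2l // ler_nat.
have [n jn n_max] := weighted_coef_argmax_ge (c N) (@W_neq0 N) j_range (muN_gt0 N)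
  (@W_small N) rho_large.
rewrite -graeffeN_factor size_W in jn n_max.
have [m [m_le m_touch]] := rnode_supporting_line rho_gt0 n_max.
have -> : ln mu + 2 ^- N * ln (2 * d%:R) = 2 ^- N * ln rho.
  by rewrite /rho [in RHS]lnM ?posrE // mulrDr ln_muN addrC.
have := convex_slope_le_line (rnd_convex N) (rnd_ge_line m_le) jn.
by apply; apply: rnd_le_node m_touch; case/andP: jn.
Qed.

Lemma rnd_slope_ge N :
  ln mu - 2 ^- N * ln (2 * d%:R) <= fine (rnd f N j.+1%:R) - fine (rnd f N j%:R).
Proof.
set rho := mu ^+ (2 ^ N) / (2 * d%:R).
have rho_gt0 : 0 < rho by rewrite divr_gt0.
pose A := c N *: \prod_(w <- take j (W N)) ('X - w%:P).
have sizeA : (size A <= j.+1)%N.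
  rewrite (leq_trans (size_scale_leq _ _)) // size_prod_XsubC.
  by rewrite size_takel ?size_W // ltnW.
have gA : g N = A * \prod_(v <- drop j (W N)) ('X - v%:P).
  by rewrite graeffeN_factor /A -scalerAl -big_cat cat_take_drop.
have rho_small : 2 * (size (drop j (W N)))%:R * rho <= mu ^+ (2 ^ N).
  rewrite size_drop size_W /rho mulrA ler_pdivrMr // mulrC.
  by rewrite ler_wpM2l ?exprn_ge0 ?(ltW mu_gt0) // ler_wpM2l // ler_nat leq_subr.
have [n n_le_j n_max] := weighted_coef_argmax_lt (muN_gt0 N) rho_gt0
  (@W_large N) rho_small (ltn0Sn j) sizeA gA.
have [m [m_le m_touch]] := rnode_supporting_line rho_gt0 (fun k _ => n_max k).
have -> : ln mu - 2 ^- N * ln (2 * d%:R) = 2 ^- N * ln rho.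
  by rewrite /rho [in RHS]ln_div ?posrE // mulrBr ln_muN.
have nj : (n <= j < d)%N by rewrite -ltnS n_le_j.
have := convex_slope_ge_line (rnd_convex N) (rnd_ge_line m_le) nj.
by apply; apply: rnd_le_node m_touch; lia.
Qed.

Lemma rnd_slope_dist N :
  `|fine (rnd f N j.+1%:R) - fine (rnd f N j%:R) - ln mu| <= 2 ^- N * ln (2 * d%:R).
Proof. by rewrite ler_distl rnd_slope_le rnd_slope_ge. Qed.

Lemma rnd_slope_fin N : (rnd f N j.+1%:R - rnd f N j%:R)%E =
  (fine (rnd f N j.+1%:R) - fine (rnd f N j%:R))%:E.
Proof. by rewrite EFinB !fineK ?rnd_fin // ler0n ler_nat // ltnW. Qed.

End Slopes.
End RenormalizedNewtonDiagram.

Theorem mainTheorem2 (R : realType) (f : {poly R[i]}) (d : nat)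
  (zeta : seq R[i]) :
  size f = d.+1 ->
  f.[0] != 0 ->
  size zeta = d ->
  f = lead_coef f *: \prod_(z <- zeta) ('X - z%:P) ->
  sorted (fun z w => modC z <= modC w) zeta ->
  forall i : nat, (1 <= i <= d)%N ->
    ((fun N : nat => (rnd f N i%:R - rnd f N (i.-1)%:R)%E) @ \oo -->
       (ln (modC zeta`_i.-1))%:E)
    /\ (forall N : nat,
        (`| rnd f N i%:R - rnd f N (i.-1)%:R - (ln (modC zeta`_i.-1))%:E |
           <= (2 ^- N * ln (2 * d%:R))%:E)%E).
Proof.
move=> size_f f0_neq0 size_zeta f_factor zeta_sorted [//|j] /andP[_ j_lt_d] /=.
have slope_fin := rnd_slope_fin size_f f0_neq0 size_zeta f_factor j_lt_d zeta_sorted.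
have slope_dist := rnd_slope_dist size_f f0_neq0 size_zeta f_factor j_lt_d zeta_sorted.
split.
- apply: cvg_EFin; first by near=> N; rewrite slope_fin.
  by apply: cvg_geometric_error => N /=; rewrite slope_fin; exact: slope_dist.
- by move=> N; rewrite slope_fin -EFinB abse_EFin lee_fin slope_dist.
Unshelve. all: by end_near.
Qed.
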